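(* Let $m\ge 1$ and let $\Delta_{m-1}=\{\alpha\in\mathbb{R}^m:\alpha_i\ge 0,\ \sum_{i=1}^m\alpha_i=1\}$. For each $i\in\{1,\dots,m\}$ let $g_i(x,y)\in\mathbb{R}^d$ (defined for all inputs $x$ and targets $y$) be the input gradient of the loss of the model using only tool $i$, and for $\alpha\in\Delta_{m-1}$ let $g_\alpha(x,y)=\nabla_x\mathcal{J}_\alpha(x,y)$ be the input gradient of the soft-composed loss $\mathcal{J}_\alpha$. Define the gradient alignment coefficient $$\rho_g=\max\Big\{0,\ \sup_{i\neq j}\ \sup_{(x,y)}\ \cos\big(g_i(x,y),g_j(x,y)\big)\Big\}\in[0,1].$$ Assume (bounded gradients) there is $G\ge 0$ with $\|g_i(x,y)\|_2\le G$ for all $i$ and all $(x,y)$, and (linear aggregation with bounded residual) for every $\alpha\in\Delta_{m-1}$ and all $(x,y)$, $$g_\alpha(x,y)=\sum_{i=1}^m\alpha_i g_i(x,y)+\xi_\alpha(x,y)\quad\text{with}\quad\|\xi_\alpha(x,y)\|_2\le\delta_g .$$ Then for every $\alpha\in\Delta_{m-1}$ and all $(x,y)$, $$\|g_\alpha(x,y)\|_2\le G\sqrt{\rho_g+(1-\rho_g)\|\alpha\|_2^2}+\delta_g .$$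
   Context: Setting: a base LLM with parameters $\theta$ and $m$ tools, tool $i$ being represented by a parameter increment $\Delta\theta_i$. For aggregation weights $\alpha$ in the probability simplex, $\mathcal{J}_\alpha(x,y)$ is the loss of the model with parameters $\theta+\sum_i\alpha_i\Delta\theta_i$ on input context $x$ (viewed as a vector in $\mathbb{R}^d$) and target action $y$; $g_i$ is the input gradient of the loss of the model with parameters $\theta+\Delta\theta_i$. $\cos(u,v)=\langle u,v\rangle/(\|u\|_2\|v\|_2)$. *)

From HB Require Import structures.
From mathcomp Require Import all_boot all_order all_algebra.
From mathcomp Require Import boolp classical_sets reals.
Set Implicit Arguments. Unset Strict Implicit. Unset Printing Implicit Defensive.
Import Order.TTheory GRing.Theory Num.Theory.
Local Open Scope ring_scope.
Local Open Scope classical_set_scope.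

Definition dotv (R : realType) (d : nat) (u v : 'rV[R]_d) : R :=
  \sum_(k < d) u 0 k * v 0 k.
Definition norm2 (R : realType) (d : nat) (u : 'rV[R]_d) : R :=
  Num.sqrt (dotv u u).
(* cosine similarity; by Rocq's convention x / 0 = 0, cos is 0 if a vector is 0 *)
Definition cosv (R : realType) (d : nat) (u v : 'rV[R]_d) : R :=
  dotv u v / (norm2 u * norm2 v).

Definition wnorm2 (R : realType) (m : nat) (a : 'I_m -> R) : R :=
  Num.sqrt (\sum_(i < m) a i ^+ 2).

Definition in_simplex (R : realType) (m : nat) (a : 'I_m -> R) : Prop :=
  (forall i, 0 <= a i) /\ \sum_(i < m) a i = 1.

Definition rho_g (R : realType) (m d : nat) (Y : Type)
    (g : 'I_m -> 'rV[R]_d -> Y -> 'rV[R]_d) : R :=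
  Num.max 0 (sup [set c : R | exists (i j : 'I_m) (x : 'rV[R]_d) (y : Y),
                   i != j /\ c = cosv (g i x y) (g j x y)]).

From HB Require Import structures.
From mathcomp Require Import all_boot all_order all_algebra.
From mathcomp Require Import boolp classical_sets reals.
From mathcomp Require Import ring lra.
Import Order.TTheory GRing.Theory Num.Theory.
Local Open Scope ring_scope.

(* The Gram matrix of the g_i
   is bounded entrywise by G^2 on the diagonal and, through the cosines, by
   rho_g G^2 off the diagonal.  Hence |sum_i alpha_i g_i|^2 is at most
   G^2 (rho_g (sum_i alpha_i)^2 + (1 - rho_g) sum_i alpha_i^2)
   = G^2 (rho_g + (1 - rho_g) |alpha|^2) on the simplex, and the triangle
   inequality adds delta_g. *)

Lemma sum_gram_weights (R : comPzRingType) (I : finType) (a : I -> R) (rho : R) :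
  \sum_i \sum_j a i * a j * (if i == j then 1 else rho) =
  rho * (\sum_i a i) ^+ 2 + (1 - rho) * \sum_i a i ^+ 2.
Proof.
rewrite expr2 big_distrlr [rho * _]mulr_sumr [(1 - rho) * _]mulr_sumr -big_split.
apply: eq_bigr => i _; rewrite (bigD1 i) //= [in RHS](bigD1 i) //= eqxx mulrDr mulr_sumr.
under eq_bigr => j /negbTE ji do rewrite eq_sym ji mulrC.
ring.
Qed.

Section InnerProduct.
Context {R : realType} {d : nat}.
Implicit Types u v : 'rV[R]_d.

Lemma dotvC u v : dotv u v = dotv v u.
Proof. by apply: eq_bigr => k _; rewrite mulrC. Qed.

Lemma dotv0l v : dotv 0 v = 0.
Proof. by rewrite /dotv big1 // => k _; rewrite mxE mul0r. Qed.

Lemma dotvv_ge0 u : 0 <= dotv u u.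
Proof. by apply: sumr_ge0 => k _; rewrite -expr2 sqr_ge0. Qed.

Lemma dotvvD u v : dotv (u + v) (u + v) = dotv u u + 2 * dotv u v + dotv v v.
Proof.
rewrite /dotv mulr_sumr -!big_split /=; apply: eq_bigr => k _; rewrite !mxE; ring.
Qed.

Lemma dotv_sumZl (I : finType) (a : I -> R) (h : I -> 'rV[R]_d) v :
  dotv (\sum_i a i *: h i) v = \sum_i a i * dotv (h i) v.
Proof.
rewrite /dotv; under eq_bigr => k _ do rewrite summxE mulr_suml.
rewrite exchange_big; apply: eq_bigr => i _; rewrite mulr_sumr.
by apply: eq_bigr => k _; rewrite mxE mulrA.
Qed.

Lemma norm2_ge0 u : 0 <= norm2 u.
Proof. exact: sqrtr_ge0. Qed.

Lemma sqr_norm2 u : norm2 u ^+ 2 = dotv u u.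
Proof. by rewrite sqr_sqrtr // dotvv_ge0. Qed.

Lemma norm2_eq0 u : (norm2 u == 0) = (u == 0).
Proof.
apply/idP/eqP => [|->]; last by rewrite /norm2 dotv0l sqrtr0.
rewrite sqrtr_eq0 => uu_le0.
have uu0 : dotv u u = 0 by apply/eqP; rewrite eq_le uu_le0 dotvv_ge0.
apply/rowP => k; rewrite mxE.
have uk_ge0 (k' : 'I_d) : true -> 0 <= u 0 k' * u 0 k' by rewrite -expr2 sqr_ge0.
have /eqP := psumr_eq0P uk_ge0 uu0 (i := k) erefl.
by rewrite mulf_eq0 orbb => /eqP.
Qed.

Lemma dotv_le_norm2M u v : dotv u v <= norm2 u * norm2 v.
Proof.
have [->|u0] := eqVneq u 0; first by rewrite dotv0l mulr_ge0 ?norm2_ge0.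
have [->|v0] := eqVneq v 0; first by rewrite dotvC dotv0l mulr_ge0 ?norm2_ge0.
have nu_gt0 : 0 < norm2 u by rewrite lt_def norm2_eq0 u0 norm2_ge0.
have nv_gt0 : 0 < norm2 v by rewrite lt_def norm2_eq0 v0 norm2_ge0.
(* |b u - a v|^2 = 2 a b (a b - <u, v>) with a = |u|, b = |v| *)
have : 0 <= \sum_(k < d) (norm2 v * u 0 k - norm2 u * v 0 k) ^+ 2.
  by apply: sumr_ge0 => k _; exact: sqr_ge0.
have -> : \sum_(k < d) (norm2 v * u 0 k - norm2 u * v 0 k) ^+ 2 =
    norm2 v ^+ 2 * dotv u u - 2 * norm2 u * norm2 v * dotv u v
    + norm2 u ^+ 2 * dotv v v.
  rewrite /dotv !mulr_sumr -sumrB -big_split /=; apply: eq_bigr => k _; ring.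
have := mulr_gt0 nu_gt0 nv_gt0; rewrite -!sqr_norm2; nra.
Qed.

Lemma norm2D u v : norm2 (u + v) <= norm2 u + norm2 v.
Proof.
rewrite -[norm2 u + norm2 v]ger0_norm ?addr_ge0 ?norm2_ge0 //.
rewrite -sqrtr_sqr ler_wsqrtr // dotvvD.
have := dotv_le_norm2M u v; rewrite -!sqr_norm2; lra.
Qed.

Lemma dotv_cosvM u v : dotv u v = cosv u v * (norm2 u * norm2 v).
Proof.
have [->|u0] := eqVneq u 0; first by rewrite /cosv !dotv0l !mul0r.
have [->|v0] := eqVneq v 0; first by rewrite /cosv !(dotvC u) !dotv0l !mul0r.
by rewrite /cosv divfK // mulf_neq0 ?norm2_eq0.
Qed.

Lemma cosv_le1 u v : cosv u v <= 1.
Proof.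
have [uv0|uv_neq0] := eqVneq (norm2 u * norm2 v) 0.
  by rewrite /cosv uv0 invr0 mulr0 ler01.
have uv_gt0 : 0 < norm2 u * norm2 v by rewrite lt_def uv_neq0 mulr_ge0 ?norm2_ge0.
by rewrite -(ler_pM2r uv_gt0) mul1r -dotv_cosvM dotv_le_norm2M.
Qed.

Lemma norm2_comb_le (m : nat) (h : 'I_m -> 'rV[R]_d) (a : 'I_m -> R) (G rho : R) :
  0 <= G -> 0 <= rho ->
  (forall i, norm2 (h i) <= G) ->
  (forall i j, i != j -> cosv (h i) (h j) <= rho) ->
  in_simplex a ->
  norm2 (\sum_i a i *: h i) <= G * Num.sqrt (rho + (1 - rho) * wnorm2 a ^+ 2).
Proof.
move=> G0 rho0 h_le cos_le [a_ge0 a_sum1].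
have gram_le i j : dotv (h i) (h j) <= (if i == j then 1 else rho) * G ^+ 2.
  case: eqP => [<-|/eqP ij]; first by rewrite mul1r -sqr_norm2 lerXn2r ?nnegrE ?norm2_ge0.
  apply: le_trans (_ : rho * (norm2 (h i) * norm2 (h j)) <= _).
    by rewrite dotv_cosvM ler_wpM2r ?mulr_ge0 ?norm2_ge0 ?cos_le.
  by rewrite ler_wpM2l // expr2 ler_pM ?norm2_ge0.
have comb_le : dotv (\sum_i a i *: h i) (\sum_i a i *: h i) <=
    G ^+ 2 * (rho + (1 - rho) * wnorm2 a ^+ 2).
  have -> : G ^+ 2 * (rho + (1 - rho) * wnorm2 a ^+ 2) =
      \sum_i \sum_j a i * a j * (if i == j then 1 else rho) * G ^+ 2.
    under eq_bigr => i _ do rewrite -mulr_suml.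
    rewrite -mulr_suml sum_gram_weights a_sum1 expr1n mulr1 [RHS]mulrC.
    by rewrite /wnorm2 sqr_sqrtr // sumr_ge0 // => i _; exact: sqr_ge0.
  rewrite dotv_sumZl; apply: ler_sum => i _; rewrite dotvC dotv_sumZl mulr_sumr.
  apply: ler_sum => j _; rewrite -!mulrA ler_wpM2l ?a_ge0 // ler_wpM2l ?a_ge0 //.
  by rewrite eq_sym gram_le.
rewrite -[G]ger0_norm // -sqrtr_sqr -sqrtrM ?sqr_ge0 //.
exact: ler_wsqrtr.
Qed.

End InnerProduct.

Section Alignment.
Variables (R : realType) (m d : nat) (Y : Type).
Variable g : 'I_m -> 'rV[R]_d -> Y -> 'rV[R]_d.

Lemma rho_g_ge0 : 0 <= rho_g g.
Proof. by rewrite le_max lexx. Qed.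

Lemma cosv_le_rho_g i j x y : i != j -> cosv (g i x y) (g j x y) <= rho_g g.
Proof.
move=> ij; rewrite le_max; apply/orP; right; apply: ub_le_sup.
  by exists 1 => c [i' [j' [x' [y' [_ ->]]]]]; exact: cosv_le1.
by exists i, j, x, y.
Qed.

End Alignment.

Theorem theorem3p6 (R : realType) (m d : nat) (Y : Type)
    (g : 'I_m -> 'rV[R]_d -> Y -> 'rV[R]_d)
    (g_soft : ('I_m -> R) -> 'rV[R]_d -> Y -> 'rV[R]_d)
    (G delta_g : R) :
  (1 <= m)%N ->
  0 <= G ->
  (forall i x y, norm2 (g i x y) <= G) ->
  (forall alpha, in_simplex alpha -> forall x y,
     exists xi : 'rV[R]_d,
       g_soft alpha x y = \sum_(i < m) alpha i *: g i x y + xi /\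
       norm2 xi <= delta_g) ->
  forall alpha, in_simplex alpha -> forall x y,
    norm2 (g_soft alpha x y)
      <= G * Num.sqrt (rho_g g + (1 - rho_g g) * wnorm2 alpha ^+ 2) + delta_g.
Proof.
(* [1 <= m] is implied by [in_simplex alpha]. *)
move=> _ G0 g_le soft_lin alpha alpha_simplex x y.
have [xi [-> xi_le]] := soft_lin alpha alpha_simplex x y.
apply: le_trans (norm2D _ _) _; apply: lerD => //.
apply: norm2_comb_le => //; first exact: rho_g_ge0.
by move=> i j; exact: cosv_le_rho_g.
Qed.
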